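(* Let $X,Y$ be real Banach spaces. Assume that $Y$ has octahedral norm and that there exists $f\in S_{X^*}$ such that $n(X^*,f)=1$. Let $H$ be a closed subspace of $L(X,Y)$ such that $X^*\otimes Y\subseteq H$. Then $H$ has octahedral norm.
   Context: The norm of a Banach space $Z$ is octahedral if for every finite-dimensional subspace $E$ of $Z$ and every $\varepsilon>0$ there is $y\in S_Z$ with $\|x+\lambda y\|\ge(1-\varepsilon)(\|x\|+|\lambda|)$ for all $x\in E$ and scalars $\lambda$. For a Banach space $Z$ and $u\in S_Z$, let $D(Z,u)=\{\varphi\in B_{Z^*}:\varphi(u)=1\}$ and let $n(Z,u)$ be the largest $k\ge0$ such that $k\|z\|\le\sup\{|\varphi(z)|:\varphi\in D(Z,u)\}$ for all $z\in Z$ (here applied with $Z=X^*$, $u=f$, so $\varphi$ ranges over $B_{X^{**}}$). $L(X,Y)$ is the space of bounded linear operators with operator norm; $X^*\otimes Y$ is the space of finite-rank operators spanned by $x\mapsto x^*(x)y$. *)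

From Stdlib Require Import Reals Lra List Classical ClassicalEpsilon.
Open Scope R_scope.
Set Implicit Arguments.

(** Supremum of a set of reals (0 if the set is empty or unbounded above). *)
Definition Rsup (A : R -> Prop) : R :=
  match excluded_middle_informative (bound A /\ exists x, A x) with
  | left h => proj1_sig (completeness A (proj1 h) (proj2 h))
  | right _ => 0
  end.

Record NormedSpace := {
  car :> Type;
  vzero : car;
  vadd : car -> car -> car;
  vopp : car -> car;
  vscal : R -> car -> car;
  vnorm : car -> R;
  vadd_assoc : forall x y z, vadd x (vadd y z) = vadd (vadd x y) z;
  vadd_comm : forall x y, vadd x y = vadd y x;
  vadd_zero : forall x, vadd x vzero = x;
  vadd_opp : forall x, vadd x (vopp x) = vzero;
  vscal_one : forall x, vscal 1 x = x;
  vscal_assoc : forall a b x, vscal a (vscal b x) = vscal (a * b) x;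
  vscal_addl : forall a b x, vscal (a + b) x = vadd (vscal a x) (vscal b x);
  vscal_addr : forall a x y, vscal a (vadd x y) = vadd (vscal a x) (vscal a y);
  vnorm_eq0 : forall x, vnorm x = 0 -> x = vzero;
  vnorm_scal : forall a x, vnorm (vscal a x) = Rabs a * vnorm x;
  vnorm_triangle : forall x y, vnorm (vadd x y) <= vnorm x + vnorm y
}.

Definition vsub (X : NormedSpace) (x y : X) : X := vadd X x (vopp X y).

Definition Banach (X : NormedSpace) : Prop :=
  forall u : nat -> X,
    (forall eps, eps > 0 -> exists N, forall n m, (n >= N)%nat -> (m >= N)%nat ->
        vnorm X (vsub X (u n) (u m)) < eps) ->
    exists l : X, Un_cv (fun n => vnorm X (vsub X (u n) l)) 0.

Definition is_linear (X Y : NormedSpace) (T : X -> Y) : Prop :=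
  forall a b x y, T (vadd X (vscal X a x) (vscal X b y)) =
                  vadd Y (vscal Y a (T x)) (vscal Y b (T y)).

Definition bounded_linear (X Y : NormedSpace) (T : X -> Y) : Prop :=
  is_linear X Y T /\ exists M, forall x, vnorm Y (T x) <= M * vnorm X x.

Definition opnorm (X Y : NormedSpace) (T : X -> Y) : R :=
  Rsup (fun r => exists x : X, vnorm X x <= 1 /\ r = vnorm Y (T x)).

Definition is_dual (X : NormedSpace) (g : X -> R) : Prop :=
  (forall a b x y, g (vadd X (vscal X a x) (vscal X b y)) = a * g x + b * g y) /\
  exists M, forall x, Rabs (g x) <= M * vnorm X x.

Definition dnorm (X : NormedSpace) (g : X -> R) : R :=
  Rsup (fun r => exists x : X, vnorm X x <= 1 /\ r = Rabs (g x)).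

Definition bidual_ball (X : NormedSpace) (phi : (X -> R) -> R) : Prop :=
  (forall a b g h, is_dual X g -> is_dual X h ->
     phi (fun x => a * g x + b * h x) = a * phi g + b * phi h) /\
  (forall g, is_dual X g -> Rabs (phi g) <= dnorm X g).

(** n(X^*, f) for f in S_{X^*}: largest k >= 0 with
    k ||z|| <= sup { |phi z| : phi in D(X^*, f) } for all z in X^*. *)
Definition numidx_dual (X : NormedSpace) (f : X -> R) : R :=
  Rsup (fun k => 0 <= k /\
    forall z, is_dual X z ->
      k * dnorm X z <= Rsup (fun r => exists phi, bidual_ball X phi /\ phi f = 1 /\
                                              r = Rabs (phi z))).

(** Octahedrality of a subspace H (with norm nrm) of a vector space V.
    A finite-dimensional subspace E of H is the span of a finite list of elements of H. *)
Definition in_span (V : Type) (zero : V) (add : V -> V -> V) (scal : R -> V -> V)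
  (l : list V) (x : V) : Prop :=
  exists cv : list (R * V), Forall (fun p => In (snd p) l) cv /\
    x = fold_right (fun p acc => add (scal (fst p) (snd p)) acc) zero cv.

Definition octahedral_in (V : Type) (zero : V) (add : V -> V -> V) (scal : R -> V -> V)
  (nrm : V -> R) (H : V -> Prop) : Prop :=
  forall (l : list V) (eps : R), Forall H l -> eps > 0 ->
    exists y, H y /\ nrm y = 1 /\
      forall x lam, in_span zero add scal l x ->
        nrm (add x (scal lam y)) >= (1 - eps) * (nrm x + Rabs lam).

Definition octahedral (X : NormedSpace) : Prop :=
  octahedral_in (vzero X) (vadd X) (vscal X) (vnorm X) (fun _ => True).

Definition op_zero (X Y : NormedSpace) : X -> Y := fun _ => vzero Y.
Definition op_add (X Y : NormedSpace) (S T : X -> Y) : X -> Y :=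
  fun x => vadd Y (S x) (T x).
Definition op_scal (X Y : NormedSpace) (a : R) (T : X -> Y) : X -> Y :=
  fun x => vscal Y a (T x).

Definition closed_subspace_L (X Y : NormedSpace) (H : (X -> Y) -> Prop) : Prop :=
  (forall T, H T -> bounded_linear X Y T) /\
  H (op_zero X Y) /\
  (forall S T, H S -> H T -> H (op_add X Y S T)) /\
  (forall a T, H T -> H (op_scal X Y a T)) /\
  (forall (Tn : nat -> X -> Y) (T : X -> Y),
     (forall n, H (Tn n)) -> bounded_linear X Y T ->
     Un_cv (fun n => opnorm X Y (fun x => vsub Y (Tn n x) (T x))) 0 -> H T).

(** X^* ⊗ Y: finite sums of rank-one operators x |-> g(x) y with g in X^*. *)
Definition in_tensor (X Y : NormedSpace) (T : X -> Y) : Prop :=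
  exists l : list ((X -> R) * Y),
    Forall (fun p => is_dual X (fst p)) l /\
    forall x, T x = fold_right (fun p acc => vadd Y (vscal Y (fst p x) (snd p)) acc)
                               (vzero Y) l.

(* Let f be a norm-one functional with n(X^*, f) = 1.  Since the states D(X^*, f) norm X^*, every
   operator T is almost normed at points x of the unit ball where f(x) is almost 1: take a
   Hahn-Banach functional g almost norming T, a state psi with |psi(g)| close to |g|, so that
   |f +- g| is close to 1 + |g|, and a point almost norming f +- g.  For a finite-dimensional
   subspace E of H, the bounded part of E is totally bounded, so finitely many such points
   x_1, ..., x_k serve all of S_E up to epsilon.  Pick y in S_Y octahedral for the span of the
   vectors T(x_i), T in E, and take the rank-one operator S x = f(x) y, which lies in H.  For T in
   S_E with matching point x_i,
     |T + l S| >= |T(x_i) + l f(x_i) y| >= (1 - eps) (|T(x_i)| + |l| f(x_i)) ~ (1 - eps) (1 + |l|). *)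

From Stdlib Require Import Reals List Lra Classical ClassicalEpsilon FunctionalExtensionality
  ProofIrrelevance.
From mathcomp Require classical_sets.
Set Bullet Behavior "Strict Subproofs".
Open Scope R_scope.

Lemma Rabs_m1 : Rabs (-1) = 1.
Proof. unfold Rabs; destruct Rcase_abs; lra. Qed.

Section NormedSpaceFacts.
Variable V : NormedSpace.
Local Notation "x '+v' y" := (vadd V x y) (at level 50, left associativity).
Local Notation "a '*v' x" := (vscal V a x) (at level 40, left associativity).
Local Notation "0v" := (vzero V).
Local Notation nm := (vnorm V).

Lemma vadd_0l x : 0v +v x = x.
Proof. rewrite vadd_comm; apply vadd_zero. Qed.

Lemma vadd_cancel_l a x y : a +v x = a +v y -> x = y.
Proof.
  intros h. assert (e : vopp V a +v (a +v x) = vopp V a +v (a +v y)) by now rewrite h.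
  rewrite !vadd_assoc, (vadd_comm _ (vopp V a) a), vadd_opp, !vadd_0l in e. exact e.
Qed.

Lemma vscal_0l x : 0 *v x = 0v.
Proof. apply (vadd_cancel_l (0 *v x)). rewrite vadd_zero, <- vscal_addl. f_equal. ring. Qed.

Lemma vscal_0r a : a *v 0v = 0v.
Proof.
  pose proof (vscal_assoc V a 0 0v) as e. rewrite vscal_0l, Rmult_0_r, vscal_0l in e. exact e.
Qed.

Lemma vopp_scal x : vopp V x = (-1) *v x.
Proof.
  apply (vadd_cancel_l x). rewrite vadd_opp. rewrite <- (vscal_one _ x) at 1.
  rewrite <- vscal_addl. replace (1 + -1) with 0 by ring. now rewrite vscal_0l.
Qed.

Lemma vadd_ACA a b c d : (a +v b) +v (c +v d) = (a +v c) +v (b +v d).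
Proof. rewrite !vadd_assoc. f_equal. rewrite <- !vadd_assoc. f_equal. apply vadd_comm. Qed.

Lemma vnorm_0 : nm 0v = 0.
Proof. rewrite <- (vscal_0l 0v), vnorm_scal, Rabs_R0. ring. Qed.

Lemma vnorm_opp x : nm (vopp V x) = nm x.
Proof. rewrite vopp_scal, vnorm_scal, Rabs_m1. ring. Qed.

Lemma vnorm_ge0 x : 0 <= nm x.
Proof.
  pose proof (vnorm_triangle V x (vopp V x)) as h.
  rewrite vadd_opp, vnorm_0, vnorm_opp in h. lra.
Qed.

Lemma vsub_add x y : vsub V x y +v y = x.
Proof.
  unfold vsub. rewrite <- vadd_assoc, (vadd_comm _ (vopp V y)), vadd_opp. apply vadd_zero.
Qed.

Lemma vadd_sub x y : vsub V (x +v y) y = x.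
Proof. unfold vsub. rewrite <- vadd_assoc, vadd_opp. apply vadd_zero. Qed.

Lemma vsub_diag x : vsub V x x = 0v.
Proof. apply vadd_opp. Qed.

Lemma vsub_trans x y z : vsub V x z = vsub V x y +v vsub V y z.
Proof.
  unfold vsub. rewrite <- vadd_assoc, (vadd_assoc _ (vopp V y)), (vadd_comm _ (vopp V y) y),
    vadd_opp, vadd_0l. reflexivity.
Qed.

Lemma vsub_ACA a b c d : vsub V (a +v b) (c +v d) = vsub V a c +v vsub V b d.
Proof. unfold vsub. rewrite !vopp_scal, vscal_addr, <- !vopp_scal. apply vadd_ACA. Qed.

Lemma vsub_scal t a b : vsub V (t *v a) (t *v b) = t *v vsub V a b.
Proof. unfold vsub. rewrite !vopp_scal, vscal_addr, !vscal_assoc. f_equal. f_equal. ring. Qed.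

Lemma vsub_scall t s v : vsub V (t *v v) (s *v v) = (t - s) *v v.
Proof. unfold vsub. rewrite vopp_scal, vscal_assoc, <- vscal_addl. f_equal. ring. Qed.

Lemma vnorm_sub_ge x y : nm x - nm y <= nm (vsub V x y).
Proof. pose proof (vnorm_triangle V (vsub V x y) y) as h. rewrite vsub_add in h. lra. Qed.

Lemma vnorm_subC x y : nm (vsub V x y) = nm (vsub V y x).
Proof.
  rewrite <- (vnorm_opp (vsub V y x)). f_equal. apply (vadd_cancel_l (vsub V y x)).
  rewrite vadd_opp, <- vsub_trans, vsub_diag. reflexivity.
Qed.

Lemma vnorm_sub_trans x y z : nm (vsub V x z) <= nm (vsub V x y) + nm (vsub V y z).
Proof. rewrite (vsub_trans x y z). apply vnorm_triangle. Qed.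

End NormedSpaceFacts.

Lemma Rsup_is_lub (A : R -> Prop) : bound A -> (exists x, A x) -> is_lub A (Rsup A).
Proof.
  intros hb hn. unfold Rsup. destruct excluded_middle_informative as [h|h].
  - destruct (completeness A _ _) as [m hm]. exact hm.
  - exfalso; tauto.
Qed.

Lemma Rsup_ub (A : R -> Prop) x : bound A -> A x -> x <= Rsup A.
Proof. intros hb hx. apply (Rsup_is_lub A hb (ex_intro _ x hx)). exact hx. Qed.

Lemma Rsup_le (A : R -> Prop) M : (exists x, A x) -> (forall x, A x -> x <= M) -> Rsup A <= M.
Proof. intros hn hM. apply (Rsup_is_lub A (ex_intro _ M hM) hn). exact hM. Qed.

Lemma Rsup_approx (A : R -> Prop) eps : bound A -> (exists x, A x) -> eps > 0 ->
  exists x, A x /\ x > Rsup A - eps.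
Proof.
  intros hb hn he. apply NNPP. intros h.
  assert (Rsup A <= Rsup A - eps); [|lra].
  apply Rsup_le; auto. intros x hx. apply Rnot_lt_le. intros hlt. apply h. exists x; split; [exact hx | lra].
Qed.

Lemma Rsup_default (A : R -> Prop) : ~ (bound A /\ exists x, A x) -> Rsup A = 0.
Proof. intros h. unfold Rsup. destruct excluded_middle_informative; tauto. Qed.

Section Operators.
Variables X Y : NormedSpace.

Lemma lin_scal T a x : is_linear X Y T -> T (vscal X a x) = vscal Y a (T x).
Proof. intros h. pose proof (h a 0 x x) as e. rewrite !vscal_0l, !vadd_zero in e. exact e. Qed.

Lemma lin_zero T : is_linear X Y T -> T (vzero X) = vzero Y.
Proof. intros h. rewrite <- (vscal_0l X (vzero X)), lin_scal by exact h. apply vscal_0l. Qed.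

Lemma lin_add T x y : is_linear X Y T -> T (vadd X x y) = vadd Y (T x) (T y).
Proof. intros h. pose proof (h 1 1 x y) as e. rewrite !vscal_one in e. exact e. Qed.

Let opnorm_set T := fun r => exists x : X, vnorm X x <= 1 /\ r = vnorm Y (T x).

Lemma opnorm_set_inhabited T : exists r, opnorm_set T r.
Proof. exists (vnorm Y (T (vzero X))), (vzero X). rewrite vnorm_0. split; auto; lra. Qed.

Lemma opnorm_set_bound T : bounded_linear X Y T -> bound (opnorm_set T).
Proof.
  intros [_ [M hM]]. exists (Rabs M). intros r [x [hx ->]].
  pose proof (vnorm_ge0 X x). pose proof (Rle_abs M). pose proof (Rabs_pos M).
  specialize (hM x). nra.
Qed.

Lemma opnorm_ub T x : bounded_linear X Y T -> vnorm X x <= 1 -> vnorm Y (T x) <= opnorm X Y T.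
Proof. intros h hx. apply Rsup_ub; [now apply opnorm_set_bound | exists x; auto]. Qed.

Lemma opnorm_le T M : (forall x, vnorm X x <= 1 -> vnorm Y (T x) <= M) -> opnorm X Y T <= M.
Proof. intros h. apply Rsup_le; [apply opnorm_set_inhabited|]. intros r [x [hx ->]]. auto. Qed.

Lemma opnorm_ge0 T : bounded_linear X Y T -> 0 <= opnorm X Y T.
Proof.
  intros h. eapply Rle_trans; [apply (vnorm_ge0 Y (T (vzero X)))|].
  apply opnorm_ub; auto. rewrite vnorm_0; lra.
Qed.

Lemma opnorm_approx T eps : bounded_linear X Y T -> eps > 0 ->
  exists x, vnorm X x <= 1 /\ vnorm Y (T x) > opnorm X Y T - eps.
Proof.
  intros h he.
  destruct (Rsup_approx _ eps (opnorm_set_bound T h) (opnorm_set_inhabited T) he)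
    as [r [[x [hx ->]] hr]].
  exists x; auto.
Qed.

Lemma opnorm_bound T x : bounded_linear X Y T -> vnorm Y (T x) <= opnorm X Y T * vnorm X x.
Proof.
  intros h. destruct (Req_dec (vnorm X x) 0) as [e|ne].
  - apply vnorm_eq0 in e. subst x. rewrite (lin_zero T (proj1 h)), !vnorm_0, Rmult_0_r. lra.
  - pose proof (vnorm_ge0 X x). set (n := vnorm X x) in *.
    assert (ex : x = vscal X n (vscal X (/ n) x)).
    { rewrite vscal_assoc, Rinv_r, vscal_one by lra. reflexivity. }
    rewrite ex at 1. rewrite (lin_scal T _ _ (proj1 h)), vnorm_scal, Rabs_right by lra.
    assert (vnorm Y (T (vscal X (/ n) x)) <= opnorm X Y T).
    { assert (hn : 0 < / n) by (apply Rinv_0_lt_compat; lra).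
      apply opnorm_ub; auto. rewrite vnorm_scal, Rabs_right, Rinv_l; try lra; exact ne. }
    nra.
Qed.

Lemma op_add_bounded S T : bounded_linear X Y S -> bounded_linear X Y T ->
  bounded_linear X Y (op_add X Y S T).
Proof.
  intros [hS [M hM]] [hT [N hN]]. split.
  - intros a b x y. unfold op_add. rewrite hS, hT, (vadd_ACA Y), <- !vscal_addr. reflexivity.
  - exists (M + N). intros x. unfold op_add. eapply Rle_trans; [apply vnorm_triangle|].
    specialize (hM x); specialize (hN x). lra.
Qed.

Lemma op_scal_bounded a T : bounded_linear X Y T -> bounded_linear X Y (op_scal X Y a T).
Proof.
  intros [hT [M hM]]. split.
  - intros c b x y. unfold op_scal. rewrite hT, vscal_addr, !vscal_assoc.
    f_equal; f_equal; ring.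
  - exists (Rabs a * M). intros x. unfold op_scal. rewrite vnorm_scal, Rmult_assoc.
    apply Rmult_le_compat_l; [apply Rabs_pos | apply hM].
Qed.

Lemma opnorm_triangle S T : bounded_linear X Y S -> bounded_linear X Y T ->
  opnorm X Y (op_add X Y S T) <= opnorm X Y S + opnorm X Y T.
Proof.
  intros hS hT. apply opnorm_le. intros x hx. unfold op_add.
  eapply Rle_trans; [apply vnorm_triangle|].
  pose proof (opnorm_ub S x hS hx). pose proof (opnorm_ub T x hT hx). lra.
Qed.

Lemma opnorm_scal a T : bounded_linear X Y T ->
  opnorm X Y (op_scal X Y a T) = Rabs a * opnorm X Y T.
Proof.
  intros h. apply Rle_antisym.
  - apply opnorm_le. intros x hx. unfold op_scal. rewrite vnorm_scal.
    apply Rmult_le_compat_l; [apply Rabs_pos | now apply opnorm_ub].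
  - destruct (Req_dec a 0) as [->|na].
    + rewrite Rabs_R0, Rmult_0_l. apply opnorm_ge0, op_scal_bounded, h.
    + pose proof (Rabs_pos_lt a na).
      assert (h' : opnorm X Y T <= / Rabs a * opnorm X Y (op_scal X Y a T)).
      { apply opnorm_le. intros x hx.
        replace (T x) with (vscal Y (/ a) (op_scal X Y a T x)).
        - rewrite vnorm_scal, Rabs_inv. apply Rmult_le_compat_l.
          + left. now apply Rinv_0_lt_compat.
          + apply opnorm_ub; auto. now apply op_scal_bounded.
        - unfold op_scal. rewrite vscal_assoc, Rinv_l, vscal_one; auto. }
      apply (Rmult_le_compat_l (Rabs a)) in h'; [|lra].
      rewrite <- Rmult_assoc, Rinv_r, Rmult_1_l in h'; lra.
Qed.

Lemma opnorm_eq0 T : bounded_linear X Y T -> opnorm X Y T = 0 -> forall x, T x = vzero Y.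
Proof.
  intros h e x. apply vnorm_eq0. pose proof (opnorm_bound T x h) as hb. rewrite e in hb.
  pose proof (vnorm_ge0 Y (T x)). lra.
Qed.

End Operators.

Definition Rnormed : NormedSpace.
Proof.
  refine (@Build_NormedSpace R 0 Rplus Ropp Rmult Rabs _ _ _ _ _ _ _ _ _ _ _);
    try (intros; ring).
  - intros x h. destruct (Req_dec x 0) as [|hx]; auto. now destruct (Rabs_no_R0 x hx).
  - intros; apply Rabs_mult.
  - intros; apply Rabs_triang.
Defined.

(* The dual X^* is L(X, Rnormed): [is_dual X g] and [bounded_linear X Rnormed g] as well as
   [dnorm X g] and [opnorm X Rnormed g] are convertible. *)
Section Dual.
Variable X : NormedSpace.

Lemma dual_ub g x : is_dual X g -> vnorm X x <= 1 -> Rabs (g x) <= dnorm X g.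
Proof. exact (opnorm_ub X Rnormed g x). Qed.

Lemma dual_bound g x : is_dual X g -> Rabs (g x) <= dnorm X g * vnorm X x.
Proof. exact (opnorm_bound X Rnormed g x). Qed.

Lemma dnorm_ge0 g : is_dual X g -> 0 <= dnorm X g.
Proof. exact (opnorm_ge0 X Rnormed g). Qed.

Lemma dnorm_le g M : (forall x, vnorm X x <= 1 -> Rabs (g x) <= M) -> dnorm X g <= M.
Proof. exact (opnorm_le X Rnormed g M). Qed.

Lemma dnorm_approx g eps : is_dual X g -> eps > 0 ->
  exists x, vnorm X x <= 1 /\ Rabs (g x) > dnorm X g - eps.
Proof. exact (opnorm_approx X Rnormed g eps). Qed.

Lemma dual_scal g a x : is_dual X g -> g (vscal X a x) = a * g x.
Proof. intros h. exact (lin_scal X Rnormed g a x (proj1 h)). Qed.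

Lemma dual_comb g1 g2 a b : is_dual X g1 -> is_dual X g2 ->
  is_dual X (fun x => a * g1 x + b * g2 x).
Proof.
  intros h1 h2.
  exact (op_add_bounded X Rnormed _ _ (op_scal_bounded X Rnormed a g1 h1)
           (op_scal_bounded X Rnormed b g2 h2)).
Qed.

End Dual.

Lemma sig_eq {A} (P : A -> Prop) (a b : sig P) : proj1_sig a = proj1_sig b -> a = b.
Proof. destruct a, b; simpl; intros ->. f_equal. apply proof_irrelevance. Qed.

Section OperatorSpace.
Variables X Y : NormedSpace.

Definition BL := {T : X -> Y | bounded_linear X Y T}.

Lemma op_zero_bounded : bounded_linear X Y (op_zero X Y).
Proof.
  split.
  - intros a b x y. unfold op_zero. rewrite !vscal_0r. symmetry; apply vadd_zero.
  - exists 0. intros; unfold op_zero. rewrite vnorm_0. lra.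
Qed.

Definition bl_zero : BL := exist _ _ op_zero_bounded.
Definition bl_add (S T : BL) : BL :=
  exist _ _ (op_add_bounded X Y _ _ (proj2_sig S) (proj2_sig T)).
Definition bl_scal (a : R) (T : BL) : BL := exist _ _ (op_scal_bounded X Y a _ (proj2_sig T)).
Definition bl_norm (T : BL) : R := opnorm X Y (proj1_sig T).

Lemma bl_ext (S T : BL) : (forall x, proj1_sig S x = proj1_sig T x) -> S = T.
Proof. intros h. apply sig_eq, functional_extensionality, h. Qed.

Definition Lspace : NormedSpace.
Proof.
  refine (@Build_NormedSpace BL bl_zero bl_add (bl_scal (-1)) bl_scal bl_norm
            _ _ _ _ _ _ _ _ _ _ _); repeat intros [? ?] || intros; try apply bl_ext; intros;
    simpl; unfold op_add, op_scal, op_zero.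
  - apply vadd_assoc.
  - apply vadd_comm.
  - apply vadd_zero.
  - rewrite <- vopp_scal. apply vadd_opp.
  - apply vscal_one.
  - apply vscal_assoc.
  - apply vscal_addl.
  - apply vscal_addr.
  - eapply opnorm_eq0; eauto.
  - apply opnorm_scal, proj2_sig.
  - apply opnorm_triangle; assumption.
Defined.

End OperatorSpace.

Section HahnBanach.
Variable X : NormedSpace.
Local Notation "x '+v' y" := (vadd X x y) (at level 50, left associativity).
Local Notation "a '*v' x" := (vscal X a x) (at level 40, left associativity).
Variable p : X -> R.
Hypothesis p_add : forall x y, p (x +v y) <= p x + p y.
Hypothesis p_scal : forall a x, p (a *v x) = Rabs a * p x.
Variable x0 : X.

Lemma seminorm_ge0 x : 0 <= p x.
Proof.
  pose proof (p_add x ((-1) *v x)) as h.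
  rewrite <- vopp_scal, vadd_opp, <- (vscal_0l X x0), !p_scal, vopp_scal, p_scal, Rabs_R0, Rabs_m1
    in h.
  lra.
Qed.

Definition admissible (e : (X -> Prop) * (X -> R)) : Prop :=
  fst e x0 /\ snd e x0 = p x0 /\
  (forall a b x y, fst e x -> fst e y -> fst e (a *v x +v b *v y) /\
     snd e (a *v x +v b *v y) = a * snd e x + b * snd e y) /\
  (forall x, fst e x -> snd e x <= p x).

Section OneStepExtension.
Variables (D : X -> Prop) (g : X -> R).
Hypothesis hadm : admissible (D, g).
Variable z : X.
Hypothesis hz : ~ D z.

Lemma adm_scal a x : D x -> D (a *v x) /\ g (a *v x) = a * g x.
Proof.
  intros hx. destruct hadm as [_ [_ [hl _]]]. destruct (hl a 0 x x hx hx) as [h1 h2].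
  simpl in h1, h2. rewrite vscal_0l, vadd_zero in h1, h2. split; auto. rewrite h2; ring.
Qed.

Lemma adm_add x y : D x -> D y -> D (x +v y) /\ g (x +v y) = g x + g y.
Proof.
  intros hx hy. destruct hadm as [_ [_ [hl _]]]. destruct (hl 1 1 x y hx hy) as [h1 h2].
  simpl in h1, h2. rewrite !vscal_one in h1, h2. split; auto. rewrite h2; ring.
Qed.

Lemma adm_zero : D (vzero X).
Proof. rewrite <- (vscal_0l X x0). apply adm_scal, hadm. Qed.

Lemma decomposition_unique y t y' t' : D y -> D y' -> y +v t *v z = y' +v t' *v z ->
  y = y' /\ t = t'.
Proof.
  intros hy hy' e.
  assert (e' : vsub X y y' +v (t - t') *v z = vzero X).
  { rewrite <- vsub_scall, <- vsub_ACA, e. apply vsub_diag. }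
  destruct (Req_dec t t') as [<-|ne].
  - rewrite Rminus_diag, vscal_0l, vadd_zero in e'. split; auto.
    rewrite <- (vsub_add X y y'), e'. apply vadd_0l.
  - exfalso. apply hz.
    assert (e2 : (t - t') *v z = (-1) *v vsub X y y').
    { apply (vadd_cancel_l X (vsub X y y')). rewrite e', <- vopp_scal, vadd_opp. reflexivity. }
    replace z with ((- / (t - t')) *v y +v (/ (t - t')) *v y').
    + destruct hadm as [_ [_ [hl _]]]. apply hl; auto.
    + rewrite <- (vscal_one X z), <- (Rinv_l (t - t')), <- vscal_assoc, e2 by lra.
      unfold vsub. rewrite vopp_scal, !vscal_addr, !vscal_assoc. f_equal; f_equal; ring.
Qed.

(* The value c assigned to z must satisfy g y - p (y - z) <= c <= p (y' + z) - g y' for all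
   y, y' in D; these bounds are compatible since g (y + y') <= p ((y - z) + (y' + z)). *)
Definition lower_bounds (r : R) := exists y, D y /\ r = g y - p (y +v (-1) *v z).

Lemma lower_bound_le y y' : D y -> D y' -> g y - p (y +v (-1) *v z) <= p (y' +v z) - g y'.
Proof.
  intros hy hy'. destruct (adm_add y y' hy hy') as [hs he].
  destruct hadm as [_ [_ [_ hdom]]]. pose proof (hdom _ hs) as hd. simpl in hd. rewrite he in hd.
  assert (ee : y +v y' = (y +v (-1) *v z) +v (y' +v z)).
  { rewrite vadd_ACA. rewrite <- (vscal_one X z) at 2. rewrite <- vscal_addl.
    replace (-1 + 1) with 0 by ring. rewrite vscal_0l, vadd_zero. reflexivity. }
  rewrite ee in hd. pose proof (p_add (y +v (-1) *v z) (y' +v z)). lra.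
Qed.

Definition z_value := Rsup lower_bounds.

Lemma cval_between y : D y -> g y - p (y +v (-1) *v z) <= z_value <= p (y +v z) - g y.
Proof.
  intros hy. assert (hb : bound lower_bounds).
  { exists (p (y +v z) - g y). intros r [y1 [h1 ->]]. apply lower_bound_le; auto. }
  split.
  - apply Rsup_ub; auto. exists y; auto.
  - apply Rsup_le; [exists (g y - p (y +v (-1) *v z)), y; auto|].
    intros r [y1 [h1 ->]]. apply lower_bound_le; auto.
Qed.

Definition D' (w : X) := exists y t, D y /\ w = y +v t *v z.

Definition decompose (w : X) : X * R :=
  epsilon (inhabits (vzero X, 0)) (fun q => D (fst q) /\ w = fst q +v snd q *v z).

Definition g' (w : X) := g (fst (decompose w)) + snd (decompose w) * z_value.

Lemma g'_eq y t : D y -> g' (y +v t *v z) = g y + t * z_value.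
Proof.
  intros hy. unfold g'.
  assert (hs : D (fst (decompose (y +v t *v z))) /\
               y +v t *v z = fst (decompose (y +v t *v z)) +v snd (decompose (y +v t *v z)) *v z).
  { unfold decompose. apply epsilon_spec. exists (y, t); simpl; auto. }
  destruct hs as [h1 h2]. destruct (decomposition_unique _ _ _ _ hy h1 h2) as [<- <-].
  reflexivity.
Qed.

Lemma g'_dominated_pos y t : D y -> t > 0 -> g y + t * z_value <= p (y +v t *v z).
Proof.
  intros hy ht. destruct (adm_scal (/ t) y hy) as [h1 h2].
  destruct (cval_between _ h1) as [_ c2]. rewrite h2 in c2.
  assert (ee : y +v t *v z = t *v ((/ t) *v y +v z)).
  { rewrite vscal_addr, vscal_assoc, Rinv_r, vscal_one by lra. reflexivity. }
  rewrite ee, p_scal, Rabs_right by lra.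
  apply (Rmult_le_compat_l t) in c2; [|lra].
  replace (t * (p (/ t *v y +v z) - / t * g y)) with (t * p (/ t *v y +v z) - g y) in c2
    by (field; lra).
  lra.
Qed.

Lemma g'_dominated_neg y t : D y -> t < 0 -> g y + t * z_value <= p (y +v t *v z).
Proof.
  intros hy ht. set (s := - t). destruct (adm_scal (/ s) y hy) as [h1 h2].
  destruct (cval_between _ h1) as [c1 _]. rewrite h2 in c1.
  assert (ee : y +v t *v z = s *v ((/ s) *v y +v (-1) *v z)).
  { rewrite vscal_addr, !vscal_assoc, Rinv_r, vscal_one by (unfold s; lra).
    f_equal. f_equal. unfold s; ring. }
  rewrite ee, p_scal, Rabs_right by (unfold s; lra).
  apply (Rmult_le_compat_l s) in c1; [|unfold s; lra].
  replace (s * (/ s * g y - p (/ s *v y +v -1 *v z))) with (g y - s * p (/ s *v y +v -1 *v z))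
    in c1 by (field; unfold s; lra).
  unfold s in *. lra.
Qed.

Lemma extension_admissible : admissible (D', g').
Proof.
  destruct hadm as [h0 [hg0 [hl hd]]]. simpl in h0, hg0, hl, hd.
  assert (hx0 : x0 = x0 +v 0 *v z) by now rewrite vscal_0l, vadd_zero.
  split; [|split; [|split]].
  - exists x0, 0. auto.
  - rewrite hx0 at 1. rewrite g'_eq, hg0 by auto. ring.
  - intros a b x y [y1 [t1 [hy1 ->]]] [y2 [t2 [hy2 ->]]].
    assert (ec : a *v (y1 +v t1 *v z) +v b *v (y2 +v t2 *v z) =
                 (a *v y1 +v b *v y2) +v (a * t1 + b * t2) *v z).
    { rewrite !vscal_addr, !vscal_assoc, vscal_addl. apply vadd_ACA. }
    rewrite ec. destruct (hl a b y1 y2 hy1 hy2) as [hs he]. split.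
    + exists (a *v y1 +v b *v y2), (a * t1 + b * t2). auto.
    + rewrite !g'_eq, he by auto. ring.
  - intros x [y [t [hy ->]]]. rewrite g'_eq by auto.
    destruct (Rtotal_order t 0) as [tn|[->|tp]].
    + now apply g'_dominated_neg.
    + rewrite vscal_0l, vadd_zero, Rmult_0_l, Rplus_0_r. auto.
    + now apply g'_dominated_pos.
Qed.

Lemma extension_extends x : D x -> D' x /\ g' x = g x.
Proof.
  intros hx. assert (e : x = x +v 0 *v z) by now rewrite vscal_0l, vadd_zero.
  split.
  - exists x, 0. auto.
  - rewrite e at 1. rewrite g'_eq by auto. ring.
Qed.

Lemma extension_dom_z : D' z.
Proof. exists (vzero X), 1. split; [apply adm_zero | now rewrite vscal_one, vadd_0l]. Qed.

End OneStepExtension.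

Definition span_x0 (w : X) := exists t, w = t *v x0.

Definition on_span_x0 (w : X) := epsilon (inhabits 0) (fun t => w = t *v x0) * p x0.

Lemma on_span_x0_eq t : on_span_x0 (t *v x0) = t * p x0.
Proof.
  unfold on_span_x0.
  pose proof (epsilon_spec (inhabits 0) (fun s => t *v x0 = s *v x0) (ex_intro _ t eq_refl))
    as h.
  simpl in h. set (s := epsilon _ _) in *.
  destruct (Req_dec s t) as [->|ne]; auto.
  assert (hx0 : x0 = vzero X).
  { rewrite <- (vscal_one X x0), <- (Rinv_l (t - s)), <- vscal_assoc, <- vsub_scall, h,
      vsub_diag by lra.
    apply vscal_0r. }
  rewrite hx0, <- (vscal_0l X (vzero X)), p_scal, Rabs_R0. ring.
Qed.

Lemma span_x0_admissible : admissible (span_x0, on_span_x0).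
Proof.
  split; [|split; [|split]].
  - exists 1. now rewrite vscal_one.
  - rewrite <- (vscal_one X x0) at 1. rewrite on_span_x0_eq. ring.
  - intros a b x y [t1 ->] [t2 ->]. rewrite !vscal_assoc, <- vscal_addl. split.
    + eexists; eauto.
    + rewrite !on_span_x0_eq. ring.
  - intros x [t ->]. rewrite on_span_x0_eq, p_scal. pose proof (seminorm_ge0 x0).
    pose proof (Rle_abs t). nra.
Qed.

Definition Adm := {e : (X -> Prop) * (X -> R) | admissible e}.

Definition extends (s t : Adm) : Prop :=
  (forall x, fst (proj1_sig s) x -> fst (proj1_sig t) x) /\
  (forall x, fst (proj1_sig s) x -> snd (proj1_sig s) x = snd (proj1_sig t) x).

Definition extendsb (s t : Adm) : bool :=
  if excluded_middle_informative (extends s t) then true else false.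

Lemma extendsP s t : is_true (extendsb s t) <-> extends s t.
Proof.
  unfold extendsb, is_true. destruct excluded_middle_informative; split; intros; try tauto.
  discriminate.
Qed.

Section ChainUnion.
Variable A : Adm -> Prop.
Hypothesis chain : forall s t, A s -> A t -> extends s t \/ extends t s.
Variable s0 : Adm.
Hypothesis hs0 : A s0.

Definition union_dom (x : X) := exists s, A s /\ fst (proj1_sig s) x.

Definition union_fun (x : X) :=
  snd (proj1_sig (epsilon (inhabits s0) (fun s => A s /\ fst (proj1_sig s) x))) x.

Lemma union_fun_eq s x : A s -> fst (proj1_sig s) x -> union_fun x = snd (proj1_sig s) x.
Proof.
  intros ha hx. unfold union_fun.
  destruct (epsilon_spec (inhabits s0) (fun s => A s /\ fst (proj1_sig s) x)) as [h1 h2].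
  { exists s; auto. }
  destruct (chain _ _ ha h1) as [[_ e]|[_ e]]; auto. symmetry; auto.
Qed.

Lemma union_admissible : admissible (union_dom, union_fun).
Proof.
  destruct (proj2_sig s0) as [h0 [hg0 _]].
  split; [|split; [|split]]; simpl.
  - exists s0. auto.
  - rewrite (union_fun_eq s0); auto.
  - intros a b x y [s1 [h1 hx]] [s2 [h2 hy]].
    assert (exists s, A s /\ fst (proj1_sig s) x /\ fst (proj1_sig s) y)
      as [s [hs [hx' hy']]].
    { destruct (chain _ _ h1 h2) as [[i _]|[i _]]; [exists s2|exists s1]; auto. }
    destruct (proj2_sig s) as [_ [_ [hl _]]].
    destruct (hl a b x y hx' hy') as [hc he]. split.
    + exists s; auto.
    + rewrite !(union_fun_eq s) by auto. exact he.
  - intros x [s [hs hx]]. rewrite (union_fun_eq s) by auto.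
    destruct (proj2_sig s) as [_ [_ [_ hd]]]. auto.
Qed.

Lemma union_extends s : A s -> extends s (exist _ _ union_admissible).
Proof.
  intros hs. split; simpl.
  - intros x hx. exists s; auto.
  - intros x hx. symmetry. apply union_fun_eq; auto.
Qed.

End ChainUnion.

Theorem hahn_banach_seminorm : exists g : X -> R,
  (forall a b x y, g (a *v x +v b *v y) = a * g x + b * g y) /\
  (forall x, g x <= p x) /\ g x0 = p x0.
Proof.
  destruct (@classical_sets.ZL_preorder Adm (exist _ _ span_x0_admissible) extendsb)
    as [[[D g] hadm] hmax].
  - intros t. apply extendsP. split; auto.
  - intros r s t h1 h2. apply extendsP in h1, h2. apply extendsP.
    destruct h1 as [a1 b1], h2 as [a2 b2]. split; auto.
    intros x hx. rewrite b1 by auto. apply b2; auto.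
  - intros A hA. destruct (classic (exists s, A s)) as [[s0 hs0]|hne].
    + assert (chain : forall s t, A s -> A t -> extends s t \/ extends t s).
      { intros s t hs ht. destruct (hA s t hs ht) as [h|h]; [left|right]; apply extendsP; auto. }
      exists (exist _ _ (union_admissible A chain s0 hs0)). intros s hs.
      apply extendsP, union_extends, hs.
    + exists (exist _ _ span_x0_admissible). intros s hs. exfalso. eauto.
  - assert (full : forall x, D x).
    { intros z. apply NNPP. intros hz.
      set (e' := exist admissible _ (extension_admissible D g hadm z hz) : Adm).
      assert (h1 : is_true (extendsb (exist _ _ hadm) e')).
      { apply extendsP. split; simpl; intros x hx;
          destruct (extension_extends D g hadm z hz x hx); auto. }
      apply hmax, extendsP in h1. apply hz, (proj1 h1), (extension_dom_z D g hadm z). }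
    clear hmax. destruct hadm as [_ [hg0 [hl hd]]]. exists g.
    split; [|split].
    + intros a b u v. apply hl; apply full.
    + intros u. apply hd, full.
    + exact hg0.
Qed.

End HahnBanach.

Lemma dnorm_approx_signed (X : NormedSpace) g eps : is_dual X g -> eps > 0 ->
  exists x, vnorm X x <= 1 /\ g x > dnorm X g - eps.
Proof.
  intros hg he. destruct (dnorm_approx X g eps hg he) as [x [hx hgx]].
  destruct (Rle_dec 0 (g x)).
  - exists x. rewrite Rabs_right in hgx by lra. auto.
  - exists (vscal X (-1) x). rewrite vnorm_scal, Rabs_m1, dual_scal by auto.
    rewrite Rabs_left in hgx by lra. split; lra.
Qed.

Lemma finite_choice {A B} (P : A -> B -> Prop) (N : list A) :
  (forall a, In a N -> exists b, P a b) ->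
  exists bs : list B, forall a, In a N -> exists b, In b bs /\ P a b.
Proof.
  induction N as [|a N IH]; intros h.
  - exists nil. intros a [].
  - destruct (h a (or_introl eq_refl)) as [b hb]. destruct IH as [bs hbs].
    { intros a' ha'. apply h. right; auto. }
    exists (b :: bs). intros a' [<-|ha'].
    + exists b. split; [left|]; auto.
    + destruct (hbs a' ha') as [b' [h1 h2]]. exists b'. split; [right|]; auto.
Qed.

Section Norming.
Variables X Y : NormedSpace.

Lemma norming_functional T x0 : bounded_linear X Y T ->
  exists g, is_dual X g /\ (forall x, Rabs (g x) <= vnorm Y (T x)) /\ g x0 = vnorm Y (T x0).
Proof.
  intros hT. set (p := fun x => vnorm Y (T x)).
  assert (p_add : forall x y, p (vadd X x y) <= p x + p y).
  { intros x y. unfold p. rewrite (lin_add X Y T x y (proj1 hT)). apply vnorm_triangle. }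
  assert (p_scal : forall a x, p (vscal X a x) = Rabs a * p x).
  { intros a x. unfold p. rewrite (lin_scal X Y T a x (proj1 hT)). apply vnorm_scal. }
  destruct (hahn_banach_seminorm X p p_add p_scal x0) as [g [hl [hd hg0]]].
  assert (habs : forall x, Rabs (g x) <= p x).
  { intros x. pose proof (hd (vscal X (-1) x)) as h.
    rewrite p_scal, Rabs_m1, <- (vadd_zero X (vscal X (-1) x)), <- (vscal_0l X x), hl in h.
    pose proof (hd x). unfold Rabs; destruct Rcase_abs; lra. }
  exists g. split; [|split]; auto.
  split; auto. exists (opnorm X Y T). intros x.
  eapply Rle_trans; [apply habs | apply opnorm_bound, hT].
Qed.

Variable f : X -> R.
Hypothesis hf : is_dual X f.
Hypothesis hf1 : dnorm X f = 1.
Hypothesis hn : numidx_dual X f = 1.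

Definition state_values (z : X -> R) (r : R) :=
  exists phi, bidual_ball X phi /\ phi f = 1 /\ r = Rabs (phi z).

Lemma state_values_bound z : is_dual X z -> bound (state_values z).
Proof. intros hz. exists (dnorm X z). intros r [phi [[_ hb] [_ ->]]]. auto. Qed.

Lemma numidx_approx eps : eps > 0 -> exists k, k > 1 - eps /\
  forall z, is_dual X z -> k * dnorm X z <= Rsup (state_values z).
Proof.
  intros he.
  set (S := fun k => 0 <= k /\ forall z, is_dual X z -> k * dnorm X z <= Rsup (state_values z)).
  assert (hS : Rsup S = 1) by exact hn.
  assert (hSne : bound S /\ exists k, S k).
  { apply NNPP. intros c. rewrite (Rsup_default S c) in hS. lra. }
  destruct (Rsup_approx S eps (proj1 hSne) (proj2 hSne) he) as [k [[_ hk] hk1]].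
  exists k. split; auto. lra.
Qed.

Lemma state_exists : exists phi, bidual_ball X phi /\ phi f = 1.
Proof.
  destruct (numidx_approx (1/2)) as [k [hk hkf]]; [lra|].
  specialize (hkf f hf). rewrite hf1 in hkf.
  destruct (classic (exists r, state_values f r)) as [[r [phi [h1 [h2 _]]]]|c].
  - exists phi; auto.
  - rewrite Rsup_default in hkf by tauto. lra.
Qed.

Lemma states_norm_dual g eta : is_dual X g -> eta > 0 ->
  exists phi, bidual_ball X phi /\ phi f = 1 /\ Rabs (phi g) >= dnorm X g - eta.
Proof.
  intros hg he. pose proof (dnorm_ge0 X g hg).
  destruct (numidx_approx (eta / (2 * (dnorm X g + 1)))) as [k [hk hkg]].
  { apply Rdiv_lt_0_compat; lra. }
  specialize (hkg g hg).
  destruct state_exists as [phi0 [hb0 hp0]].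
  destruct (Rsup_approx (state_values g) (eta / 2) (state_values_bound g hg))
    as [r [[phi [h1 [h2 ->]]] hr]]; [exists (Rabs (phi0 g)), phi0; auto | lra |].
  exists phi. split; [|split]; auto.
  assert (eta / (2 * (dnorm X g + 1)) * dnorm X g <= eta / 2).
  { apply Rle_trans with (eta / (2 * (dnorm X g + 1)) * (dnorm X g + 1)).
    - apply Rmult_le_compat_l; [|lra]. left. apply Rdiv_lt_0_compat; lra.
    - right. field. lra. }
  nra.
Qed.

Lemma aligned_sign g eta : is_dual X g -> eta > 0 ->
  exists s, Rabs s = 1 /\ dnorm X (fun x => 1 * f x + s * g x) >= 1 + dnorm X g - eta.
Proof.
  intros hg he. destruct (states_norm_dual g eta hg he) as [phi [[hpl hpb] [hpf hpg]]].
  set (s := if Rle_dec 0 (phi g) then 1 else -1).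
  assert (hs : s * phi g = Rabs (phi g)).
  { unfold s. destruct Rle_dec; unfold Rabs; destruct Rcase_abs; lra. }
  assert (hs1 : Rabs s = 1) by (unfold s; destruct Rle_dec; [apply Rabs_R1 | apply Rabs_m1]).
  exists s. split; auto.
  pose proof (hpb _ (dual_comb X f g 1 s hf hg)) as hb.
  rewrite hpl, hpf, hs, Rabs_right in hb by (auto; pose proof (Rabs_pos (phi g)); lra).
  lra.
Qed.

Lemma almost_norming_point T delta : bounded_linear X Y T -> delta > 0 ->
  exists x, vnorm X x <= 1 /\ f x >= 1 - delta /\ vnorm Y (T x) >= opnorm X Y T - delta.
Proof.
  intros hT hd. set (e := delta / 3). assert (ep : e > 0) by (unfold e; lra).
  destruct (opnorm_approx X Y T e hT ep) as [x0 [hx0 hTx0]].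
  destruct (norming_functional T x0 hT) as [g [hg [hgT hgx0]]].
  assert (hgx0' : vnorm Y (T x0) <= dnorm X g).
  { rewrite <- hgx0. eapply Rle_trans; [apply Rle_abs | apply dual_ub; auto]. }
  destruct (aligned_sign g e hg ep) as [s [hs1 hs]].
  destruct (dnorm_approx_signed X _ e (dual_comb X f g 1 s hf hg) ep) as [x [hx hsum]].
  assert (hfx : f x <= 1).
  { rewrite <- hf1. eapply Rle_trans; [apply Rle_abs | apply dual_ub; auto]. }
  assert (hgx : s * g x <= Rabs (g x)).
  { rewrite <- (Rmult_1_l (Rabs (g x))), <- hs1, <- Rabs_mult. apply Rle_abs. }
  assert (Rabs (g x) <= dnorm X g) by (apply dual_ub; auto).
  pose proof (hgT x).
  exists x. unfold e in *. split; [|split]; lra.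
Qed.

Lemma finite_norming_points (N : list (Lspace X Y)) delta : delta > 0 ->
  exists xs, forall n, In n N -> exists x, In x xs /\ vnorm X x <= 1 /\ f x >= 1 - delta /\
    vnorm Y (proj1_sig n x) >= vnorm _ n - delta.
Proof.
  intros hd. apply finite_choice. intros n _.
  exact (almost_norming_point (proj1_sig n) delta (proj2_sig n) hd).
Qed.

End Norming.

Lemma real_grid_interval h : h > 0 -> forall n a, exists G : list R,
  forall t, a <= t <= a + INR n * h -> exists s, In s G /\ Rabs (t - s) <= h.
Proof.
  intros hp n. induction n as [|n IH]; intros a.
  - exists (a :: nil). intros t ht. simpl in ht. exists a. split; [left; auto|].
    replace (t - a) with 0 by lra. rewrite Rabs_R0; lra.
  - destruct (IH (a + h)) as [G hG]. exists (a :: G). intros t ht. rewrite S_INR in ht.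
    destruct (Rle_dec t (a + h)).
    + exists a. split; [left; auto|]. rewrite Rabs_right; lra.
    + destruct (hG t) as [s [hs hs2]]; [lra|]. exists s; split; auto. right; auto.
Qed.

Lemma real_grid K rho : rho > 0 -> exists G : list R,
  forall t, Rabs t <= K -> exists s, In s G /\ Rabs (t - s) < rho.
Proof.
  intros hr. destruct (INR_archimed (rho / 2) (2 * Rabs K) ltac:(lra)) as [n hn].
  destruct (real_grid_interval (rho / 2) ltac:(lra) n (- Rabs K)) as [G hG]. exists G.
  intros t ht. pose proof (Rle_abs K). pose proof (Rabs_pos K).
  destruct (hG t) as [s [hs hs2]].
  - pose proof (Rle_abs t). pose proof (Rle_abs (- t)). rewrite Rabs_Ropp in *. lra.
  - exists s. split; auto. lra.
Qed.

Section FiniteDimensional.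
Variable V : NormedSpace.
Local Notation "x '+v' y" := (vadd V x y) (at level 50, left associativity).
Local Notation "a '*v' x" := (vscal V a x) (at level 40, left associativity).
Local Notation nm := (vnorm V).
Local Notation "0v" := (vzero V).

Fixpoint span_list (l : list V) (w : V) : Prop :=
  match l with
  | nil => w = 0v
  | v :: l' => exists t u, span_list l' u /\ w = u +v t *v v
  end.

Lemma span_list_0 l : span_list l 0v.
Proof. induction l; simpl; auto. exists 0, 0v. split; auto. now rewrite vscal_0l, vadd_zero. Qed.

Lemma span_list_add l x y : span_list l x -> span_list l y -> span_list l (x +v y).
Proof.
  revert x y. induction l as [|v l IH]; simpl; intros x y.
  - intros -> ->. apply vadd_zero.
  - intros [t1 [u1 [h1 ->]]] [t2 [u2 [h2 ->]]]. exists (t1 + t2), (u1 +v u2).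
    split; [apply IH; auto|]. rewrite vscal_addl. apply vadd_ACA.
Qed.

Lemma span_list_scal l a x : span_list l x -> span_list l (a *v x).
Proof.
  revert x. induction l as [|v l IH]; simpl; intros x.
  - intros ->. apply vscal_0r.
  - intros [t [u [h ->]]]. exists (a * t), (a *v u). split; [apply IH; auto|].
    rewrite vscal_addr, vscal_assoc. auto.
Qed.

Lemma span_list_cons l v u : span_list l u -> span_list (v :: l) u.
Proof. intros h. exists 0, u. split; auto. now rewrite vscal_0l, vadd_zero. Qed.

Lemma span_list_in l v : In v l -> span_list l v.
Proof.
  induction l as [|w l IH]; simpl; [tauto|]. intros [<-|h].
  - exists 1, 0v. split; [apply span_list_0 | now rewrite vscal_one, vadd_0l].
  - apply span_list_cons. auto.
Qed.

Definition has_finite_nets (P : V -> Prop) : Prop :=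
  forall r delta, delta > 0 -> exists N : list V, (forall n, In n N -> P n) /\
    forall w, P w -> nm w <= r -> exists n, In n N /\ nm (vsub V w n) < delta.

Lemma span_nil_has_finite_nets : has_finite_nets (span_list nil).
Proof.
  intros r delta hd. exists (0v :: nil). split.
  - intros n [<-|[]]. reflexivity.
  - intros w hw _. simpl in hw. subst w. exists 0v. split; [left; auto|].
    rewrite vsub_diag, vnorm_0. lra.
Qed.

Section Cons.
Variables (l : list V) (v : V).
Hypothesis hnets : has_finite_nets (span_list l).

Lemma span_cons_has_finite_nets_near :
  (forall eta, eta > 0 -> exists u, span_list l u /\ nm (vsub V v u) < eta) ->
  has_finite_nets (span_list (v :: l)).
Proof.
  intros hnear r delta hd.
  destruct (hnets (r + delta / 2) (delta / 2) ltac:(lra)) as [N [hN1 hN2]].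
  exists N. split; [intros n hn; apply span_list_cons; auto|].
  intros w [t [u [hu ->]]] hw. pose proof (Rabs_pos t).
  destruct (hnear (delta / (2 * (Rabs t + 1)))) as [u' [hu' hu'n]].
  { apply Rdiv_lt_0_compat; lra. }
  set (w' := u +v t *v u').
  assert (d1 : nm (vsub V (u +v t *v v) w') < delta / 2).
  { unfold w'. rewrite vsub_ACA, vsub_diag, vadd_0l, vsub_scal, vnorm_scal.
    pose proof (vnorm_ge0 V (vsub V v u')).
    apply Rle_lt_trans with (Rabs t * (delta / (2 * (Rabs t + 1)))).
    - apply Rmult_le_compat_l; lra.
    - apply Rlt_le_trans with ((Rabs t + 1) * (delta / (2 * (Rabs t + 1)))).
      + apply Rmult_lt_compat_r; [apply Rdiv_lt_0_compat|]; lra.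
      + right. field. lra. }
  assert (nw' : nm w' <= r + delta / 2).
  { pose proof (vnorm_sub_ge V w' (u +v t *v v)) as h. rewrite vnorm_subC in h. lra. }
  destruct (hN2 w' (span_list_add _ _ _ hu (span_list_scal _ _ _ hu')) nw') as [n [hn hn2]].
  exists n. split; auto. pose proof (vnorm_sub_trans V (u +v t *v v) w' n). lra.
Qed.

Lemma coefficient_bound_far eta t u : span_list l u ->
  (forall u, span_list l u -> nm (vsub V v u) >= eta) -> Rabs t * eta <= nm (u +v t *v v).
Proof.
  intros hu hfar. destruct (Req_dec t 0) as [->|nt].
  - rewrite Rabs_R0, Rmult_0_l. apply vnorm_ge0.
  - assert (e : u +v t *v v = t *v vsub V v ((- / t) *v u)).
    { unfold vsub. rewrite vopp_scal, vscal_assoc, vscal_addr, vscal_assoc.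
      replace (t * (-1 * - / t)) with 1 by (field; auto). rewrite vscal_one. apply vadd_comm. }
    rewrite e, vnorm_scal. apply Rmult_le_compat_l; [apply Rabs_pos|].
    pose proof (hfar _ (span_list_scal l (- / t) u hu)). lra.
Qed.

Lemma span_cons_has_finite_nets_far eta : eta > 0 ->
  (forall u, span_list l u -> nm (vsub V v u) >= eta) ->
  has_finite_nets (span_list (v :: l)).
Proof.
  intros he hfar r delta hd. pose proof (vnorm_ge0 V v). pose proof (Rle_abs r).
  set (K := Rabs r / eta).
  destruct (hnets (Rabs r + K * nm v) (delta / 2) ltac:(lra)) as [N [hN1 hN2]].
  destruct (real_grid K (delta / (2 * (nm v + 1)))) as [G hG].
  { apply Rdiv_lt_0_compat; lra. }
  exists (flat_map (fun n => map (fun s => n +v s *v v) G) N). split.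
  { intros m hm. apply in_flat_map in hm. destruct hm as [n [hn hm]].
    apply in_map_iff in hm. destruct hm as [s [<- _]]. exists s, n. auto. }
  intros w [t [u [hu ->]]] hw.
  pose proof (coefficient_bound_far eta t u hu hfar).
  assert (htK : Rabs t <= K).
  { unfold K. apply Rmult_le_reg_r with eta; auto. unfold Rdiv.
    rewrite Rmult_assoc, Rinv_l by lra. lra. }
  assert (hun : nm u <= Rabs r + K * nm v).
  { rewrite <- (vadd_sub V u (t *v v)). eapply Rle_trans; [apply vnorm_triangle|].
    rewrite vnorm_opp, vnorm_scal.
    assert (Rabs t * nm v <= K * nm v) by (apply Rmult_le_compat_r; auto). lra. }
  destruct (hN2 u hu hun) as [n [hn hn2]].
  destruct (hG t htK) as [s [hs hs2]].
  exists (n +v s *v v). split.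
  { apply in_flat_map. exists n. split; auto. apply in_map_iff. exists s; auto. }
  rewrite vsub_ACA. eapply Rle_lt_trans; [apply vnorm_triangle|].
  rewrite vsub_scall, vnorm_scal.
  assert (Rabs (t - s) * nm v < delta / 2).
  { apply Rle_lt_trans with (Rabs (t - s) * (nm v + 1)).
    - apply Rmult_le_compat_l; [apply Rabs_pos|lra].
    - apply Rlt_le_trans with (delta / (2 * (nm v + 1)) * (nm v + 1)).
      + apply Rmult_lt_compat_r; lra.
      + right; field; lra. }
  lra.
Qed.

End Cons.

Lemma span_list_has_finite_nets l : has_finite_nets (span_list l).
Proof.
  induction l as [|v l IH]; [apply span_nil_has_finite_nets|].
  destruct (classic (forall eta, eta > 0 -> exists u, span_list l u /\ nm (vsub V v u) < eta))
    as [hnear|hnot].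
  - now apply span_cons_has_finite_nets_near.
  - apply not_all_ex_not in hnot as [eta hnot].
    apply imply_to_and in hnot as [he hnot].
    apply (span_cons_has_finite_nets_far l v IH eta he).
    intros u hu. apply Rnot_lt_ge. intros hlt. apply hnot. exists u. auto.
Qed.

End FiniteDimensional.

Section FiniteSpan.
Variable Y : NormedSpace.

Definition vspan (F : list Y) (y : Y) : Prop := in_span (vzero Y) (vadd Y) (vscal Y) F y.

Definition lincomb (cv : list (R * Y)) : Y :=
  fold_right (fun p acc => vadd Y (vscal Y (fst p) (snd p)) acc) (vzero Y) cv.

Lemma lincomb_app c1 c2 : lincomb (c1 ++ c2) = vadd Y (lincomb c1) (lincomb c2).
Proof.
  induction c1 as [|p c1 IH]; simpl.
  - symmetry; apply vadd_0l.
  - unfold lincomb in *. simpl. rewrite IH. apply vadd_assoc.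
Qed.

Lemma lincomb_scal a cv : lincomb (map (fun p => (a * fst p, snd p)) cv) = vscal Y a (lincomb cv).
Proof.
  induction cv as [|p cv IH]; simpl.
  - symmetry; apply vscal_0r.
  - unfold lincomb in *. simpl. rewrite IH, vscal_addr, vscal_assoc. reflexivity.
Qed.

Lemma vspan_0 F : vspan F (vzero Y).
Proof. exists nil. split; auto. Qed.

Lemma vspan_in F y : In y F -> vspan F y.
Proof.
  intros h. exists ((1, y) :: nil). split; [constructor; auto|].
  simpl. now rewrite vscal_one, vadd_zero.
Qed.

Lemma vspan_add F a b : vspan F a -> vspan F b -> vspan F (vadd Y a b).
Proof.
  intros [c1 [h1 ->]] [c2 [h2 ->]]. exists (c1 ++ c2).
  split; [apply Forall_app; auto | symmetry; apply lincomb_app].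
Qed.

Lemma vspan_scal F t a : vspan F a -> vspan F (vscal Y t a).
Proof.
  intros [c [h ->]]. exists (map (fun p => (t * fst p, snd p)) c). split.
  - apply Forall_map. eapply Forall_impl; [|exact h]. simpl. auto.
  - symmetry. apply lincomb_scal.
Qed.

End FiniteSpan.

Lemma octahedral_ineq_of_unit (V : NormedSpace) (P : V -> Prop) (s : V) (c : R) :
  vnorm V s = 1 -> c <= 1 -> (forall a w, P w -> P (vscal V a w)) ->
  (forall w mu, P w -> vnorm V w = 1 -> vnorm V (vadd V w (vscal V mu s)) >= c * (1 + Rabs mu)) ->
  forall w lam, P w -> vnorm V (vadd V w (vscal V lam s)) >= c * (vnorm V w + Rabs lam).
Proof.
  intros hs hc hP hu w lam hw. pose proof (vnorm_ge0 V w) as h0.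
  destruct (Req_dec (vnorm V w) 0) as [e|ne].
  - apply vnorm_eq0 in e. subst w. rewrite vadd_0l, vnorm_scal, hs, vnorm_0.
    pose proof (Rabs_pos lam). nra.
  - set (r := vnorm V w) in *. assert (rp : r > 0) by lra.
    assert (hrinv : / r > 0) by now apply Rinv_0_lt_compat.
    assert (hw1 : vnorm V (vscal V (/ r) w) = 1).
    { rewrite vnorm_scal, Rabs_right by lra. fold r. field. lra. }
    pose proof (hu _ (lam / r) (hP _ _ hw) hw1) as h.
    assert (e : vadd V w (vscal V lam s) = vscal V r (vadd V (vscal V (/ r) w) (vscal V (lam / r) s))).
    { rewrite vscal_addr, !vscal_assoc, Rinv_r, vscal_one by lra.
      replace (r * (lam / r)) with lam by (field; lra). reflexivity. }
    rewrite e, vnorm_scal, Rabs_right by lra.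
    unfold Rdiv in h. rewrite Rabs_mult, Rabs_inv, (Rabs_right r) in h by lra.
    apply Rmult_ge_compat_l with (r := r) in h; [|lra].
    replace (r * (c * (1 + Rabs lam * / r))) with (c * (r + Rabs lam)) in h by (field; lra).
    lra.
Qed.

Section OperatorSpans.
Variables X Y : NormedSpace.

(* Operators outside L(X, Y) are sent to 0; only bounded ones are ever lifted. *)
Definition to_Lspace (T : X -> Y) : Lspace X Y :=
  match excluded_middle_informative (bounded_linear X Y T) with
  | left h => exist _ T h
  | right _ => bl_zero X Y
  end.

Lemma to_Lspace_val T : bounded_linear X Y T -> proj1_sig (to_Lspace T) = T.
Proof. intros h. unfold to_Lspace. destruct excluded_middle_informative; easy. Qed.

Lemma in_span_to_Lspace (l : list (X -> Y)) T : Forall (bounded_linear X Y) l ->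
  in_span (op_zero X Y) (op_add X Y) (op_scal X Y) l T ->
  exists W, span_list (Lspace X Y) (map to_Lspace l) W /\ proj1_sig W = T.
Proof.
  intros hl [cv [hcv ->]]. induction cv as [|[a T] cv IH].
  - exists (vzero (Lspace X Y)). split; [apply span_list_0 | reflexivity].
  - inversion hcv as [|? ? hT hcv']; subst. simpl in hT.
    destruct (IH hcv') as [W [hW he]].
    exists (vadd (Lspace X Y) (vscal (Lspace X Y) a (to_Lspace T)) W). split.
    + apply span_list_add; auto. apply span_list_scal, span_list_in, in_map, hT.
    + simpl. rewrite he, to_Lspace_val; [reflexivity|].
      rewrite Forall_forall in hl. auto.
Qed.

Lemma span_list_eval (l : list (X -> Y)) (F : list Y) x : Forall (bounded_linear X Y) l ->
  (forall T, In T l -> vspan Y F (T x)) ->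
  forall W, span_list (Lspace X Y) (map to_Lspace l) W -> vspan Y F (proj1_sig W x).
Proof.
  intros hl hF. induction l as [|T l IH]; intros W hW.
  - simpl in hW. subst W. apply vspan_0.
  - inversion hl as [|? ? hT hl']; subst.
    destruct hW as [t [U [hU ->]]]. simpl. unfold op_add, op_scal.
    apply vspan_add.
    + apply IH; auto. intros T' h'. apply hF. right; auto.
    + apply vspan_scal. rewrite to_Lspace_val by auto. apply hF. left; auto.
Qed.

Definition evaluations (l : list (X -> Y)) (xs : list X) : list Y :=
  flat_map (fun T => map (fun x => T x) xs) l.

Lemma span_list_eval_evaluations l xs x W : Forall (bounded_linear X Y) l -> In x xs ->
  span_list (Lspace X Y) (map to_Lspace l) W -> vspan Y (evaluations l xs) (proj1_sig W x).
Proof.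
  intros hl hx. apply span_list_eval; auto. intros T hT.
  apply vspan_in, in_flat_map. exists T. split; auto. apply in_map_iff. eauto.
Qed.

Definition rank_one (f : X -> R) (y : Y) : X -> Y := fun x => vscal Y (f x) y.

Lemma rank_one_bounded f y : is_dual X f -> bounded_linear X Y (rank_one f y).
Proof.
  intros hf. split.
  - intros a b x1 x2. unfold rank_one. rewrite (proj1 hf), vscal_addl, !vscal_assoc.
    reflexivity.
  - exists (dnorm X f * vnorm Y y). intros x. unfold rank_one. rewrite vnorm_scal.
    pose proof (dual_bound X f x hf). pose proof (vnorm_ge0 Y y). nra.
Qed.

Lemma opnorm_rank_one f y : is_dual X f -> vnorm Y y = 1 ->
  opnorm X Y (rank_one f y) = dnorm X f.
Proof.
  intros hf hy. unfold rank_one. apply Rle_antisym.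
  - apply opnorm_le. intros x hx. rewrite vnorm_scal, hy, Rmult_1_r. now apply dual_ub.
  - apply dnorm_le. intros x hx. rewrite <- (Rmult_1_r (Rabs (f x))), <- hy, <- vnorm_scal.
    apply (opnorm_ub X Y (rank_one f y)); auto. now apply rank_one_bounded.
Qed.

Lemma rank_one_in_tensor f y : is_dual X f -> in_tensor X Y (rank_one f y).
Proof.
  intros hf. exists ((f, y) :: nil). split; [constructor; auto|].
  intros x. symmetry. apply vadd_zero.
Qed.

End OperatorSpans.

Lemma octahedral_arith e d a b m : 0 <= e <= 1 -> 0 <= d <= 1/2 -> 0 <= m ->
  a >= 1 - 2 * d -> b >= m * (1 - d) -> (1 - e) * (a + b) - d >= (1 - e - 3 * d) * (1 + m).
Proof.
  intros he hd hm ha hb.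
  assert ((1 - e) * (a + b) >= (1 - e) * ((1 - 2 * d) + m * (1 - d))).
  { apply Rle_ge, Rmult_le_compat_l; lra. }
  assert (0 <= e * d * (2 + m)) by (apply Rmult_le_pos; [apply Rmult_le_pos|]; lra).
  nra.
Qed.

Section UnitEstimate.
Variables X Y : NormedSpace.
Variables (f : X -> R) (y : Y) (F : list Y) (e d : R).
Hypotheses (hf : is_dual X f) (he : 0 <= e <= 1) (hd : 0 <= d <= 1/2).
Hypothesis hoct : forall z lam, vspan Y F z ->
  vnorm Y (vadd Y z (vscal Y lam y)) >= (1 - e) * (vnorm Y z + Rabs lam).

Let S : Lspace X Y := exist _ _ (rank_one_bounded X Y f y hf).

Lemma unit_estimate (W N : Lspace X Y) x0 mu :
  vnorm _ W = 1 -> vnorm _ (vsub _ W N) < d ->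
  vnorm X x0 <= 1 -> f x0 >= 1 - d -> vnorm Y (proj1_sig N x0) >= vnorm _ N - d ->
  vspan Y F (proj1_sig N x0) ->
  vnorm _ (vadd _ W (vscal _ mu S)) >= (1 - e - 3 * d) * (1 + Rabs mu).
Proof.
  intros hW hWN hx0 hfx0 hNx0 hspan.
  set (B := vadd _ N (vscal _ mu S)).
  assert (hAB : vnorm _ (vadd _ W (vscal _ mu S)) >= vnorm _ B - d).
  { pose proof (vnorm_sub_ge _ B (vadd _ W (vscal _ mu S))) as h.
    rewrite vnorm_subC in h. unfold B in *.
    rewrite vsub_ACA, vsub_diag, vadd_zero in h. lra. }
  assert (hBx : vnorm Y (proj1_sig B x0) <= vnorm _ B).
  { apply (opnorm_ub X Y (proj1_sig B) x0 (proj2_sig B) hx0). }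
  assert (eB : proj1_sig B x0 = vadd Y (proj1_sig N x0) (vscal Y (mu * f x0) y)).
  { simpl. unfold op_add, op_scal, rank_one. rewrite vscal_assoc. reflexivity. }
  pose proof (hoct _ (mu * f x0) hspan) as hB. rewrite <- eB in hB.
  pose proof (vnorm_sub_ge _ W N) as hN.
  assert (hmu : Rabs (mu * f x0) >= Rabs mu * (1 - d)).
  { rewrite Rabs_mult, (Rabs_right (f x0)) by lra. pose proof (Rabs_pos mu).
    apply Rle_ge, Rmult_le_compat_l; lra. }
  pose proof (octahedral_arith e d (vnorm Y (proj1_sig N x0)) (Rabs (mu * f x0)) (Rabs mu)
    he hd (Rabs_pos mu) ltac:(lra) hmu).
  lra.
Qed.

End UnitEstimate.

Lemma small_parameters eps : eps > 0 ->
  exists e d, 0 < e <= 1 /\ 0 < d <= 1/2 /\ e + 3 * d <= eps.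
Proof.
  intros he. exists (Rmin (eps / 2) 1), (Rmin (eps / 6) (1 / 2)).
  pose proof (Rmin_l (eps / 2) 1). pose proof (Rmin_r (eps / 2) 1).
  pose proof (Rmin_l (eps / 6) (1 / 2)). pose proof (Rmin_r (eps / 6) (1 / 2)).
  assert (0 < Rmin (eps / 2) 1) by (apply Rmin_glb_lt; lra).
  assert (0 < Rmin (eps / 6) (1 / 2)) by (apply Rmin_glb_lt; lra).
  lra.
Qed.

Theorem mainTheorem4 (X Y : NormedSpace) (H : (X -> Y) -> Prop) :
  Banach X -> Banach Y ->
  octahedral Y ->
  (exists f : X -> R, is_dual X f /\ dnorm X f = 1 /\ numidx_dual X f = 1) ->
  closed_subspace_L X Y H ->
  (forall T, in_tensor X Y T -> H T) ->
  octahedral_in (op_zero X Y) (@op_add X Y) (@op_scal X Y) (@opnorm X Y) H.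
Proof.
  intros _ _ octY [f [hf [hf1 hn]]] [hH _] hten l eps hl heps.
  assert (hlb : Forall (bounded_linear X Y) l) by (eapply Forall_impl; [exact hH | exact hl]).
  destruct (small_parameters eps heps) as [e [d [he [hd hed]]]].
  set (E := map (to_Lspace X Y) l).
  destruct (span_list_has_finite_nets _ E 1 d) as [N [hN hnet]]; [lra|].
  destruct (finite_norming_points X Y f hf hf1 hn N d) as [xs hxs]; [lra|].
  destruct (octY (evaluations X Y l xs) e) as [y [_ [hy1 hoct]]];
    [apply Forall_forall; auto | lra |].
  set (S := exist _ _ (rank_one_bounded X Y f y hf) : Lspace X Y).
  assert (hS1 : vnorm _ S = 1) by (rewrite <- hf1; apply opnorm_rank_one; auto).
  exists (rank_one X Y f y). split; [apply hten, rank_one_in_tensor, hf | split; [exact hS1|]].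
  intros T lam hT. destruct (in_span_to_Lspace X Y l T hlb hT) as [W [hW <-]].
  apply (octahedral_ineq_of_unit _ _ S (1 - eps) hS1 ltac:(lra) (span_list_scal _ E)); auto.
  intros W0 mu hW0 hW01. destruct (hnet W0 hW0 ltac:(lra)) as [n [hnN hn2]].
  destruct (hxs n hnN) as [x0 [hx0 [hx01 [hfx0 hnx0]]]].
  eapply Rge_trans.
  - apply (unit_estimate X Y f y _ e d hf ltac:(lra) ltac:(lra) hoct W0 n x0); auto; try lra.
    now apply span_list_eval_evaluations, hN.
  - apply Rle_ge, Rmult_le_compat_r; [pose proof (Rabs_pos mu) |]; lra.
Qed.
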